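(* Let $d>0$, let $I\subseteq\mathbb{R}$ be a nonempty, non-singleton interval with $\ell(I)\geq d$, and let $f: I\to\mathbb{R}$ be bounded from below. Then the function $\widetilde{f}: I\to\mathbb{R}$ defined by $$\widetilde{f}(x):=\min\Big\{f(x),\ \inf_{t\in[x+d,\infty[\cap I}f(t)\Big\}\qquad(x\in I)$$ is the greatest $d$-periodically increasing minorant of $f$; that is, $\widetilde{f}\leq f$, $\widetilde{f}$ is $d$-periodically increasing, and every $d$-periodically increasing $g: I\to\mathbb{R}$ with $g\leq f$ satisfies $g\leq\widetilde{f}$.
   Context: $\ell(I)$ denotes the length of $I$. A function $f: I\to\mathbb{R}$ is $d$-periodically increasing if $f(x)\leq f(y)$ for all $x,y\in I$ with $y-x\geq d$. The infimum over the empty set is $+\infty$. *)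

From Stdlib Require Import Reals.
From Coquelicot Require Import Coquelicot.
Open Scope R_scope.

Definition is_interval (I : R -> Prop) : Prop :=
  forall x y z, I x -> I z -> x <= y <= z -> I y.

Definition nondegenerate (I : R -> Prop) : Prop :=
  exists a b, I a /\ I b /\ a < b.

(* length ell(I) = sup { b - a | a, b in I } (possibly +oo); ell(I) >= d. *)
Definition length_ge (I : R -> Prop) (d : R) : Prop :=
  forall L, L < d -> exists a b, I a /\ I b /\ b - a > L.

Definition bounded_below_on (I : R -> Prop) (f : R -> R) : Prop :=
  exists m, forall x, I x -> m <= f x.

Definition d_periodically_increasing (I : R -> Prop) (d : R) (f : R -> R) : Prop :=
  forall x y, I x -> I y -> y - x >= d -> f x <= f y.

(* inf_{t in [x+d, oo[ cap I} f t, in Rbar (p_infty if the set is empty). *)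
Definition tail_inf (I : R -> Prop) (d : R) (f : R -> R) (x : R) : Rbar :=
  Glb_Rbar (fun v => exists t, I t /\ x + d <= t /\ v = f t).

Definition ftilde (I : R -> Prop) (d : R) (f : R -> R) (x : R) : R :=
  real (Rbar_min (Finite (f x)) (tail_inf I d f x)).

From Stdlib Require Import Reals Lra.
From Coquelicot Require Import Coquelicot.
Open Scope R_scope.

(* ftilde x is the greatest lower bound of f on {x} together with the tail
   [x + d, oo[ of I.  A d-periodically increasing minorant g satisfies
   g x <= g t <= f t on that set, so g x <= ftilde x.  If y - x >= d, then
   y and its tail lie in the tail of x (as d >= 0), so ftilde x is a lower
   bound of f there, whence ftilde x <= ftilde y. *)

Section TildeMinorant.

Variables (I : R -> Prop) (d : R) (f : R -> R).

Lemma tail_inf_le_f (x t : R) :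
  I t -> x + d <= t -> Rbar_le (tail_inf I d f x) (f t).
Proof.
  intros ht hxt.
  apply (proj1 (Glb_Rbar_correct _)).
  now exists t.
Qed.

Lemma le_tail_inf (x : R) (c : Rbar) :
  (forall t, I t -> x + d <= t -> Rbar_le c (f t)) -> Rbar_le c (tail_inf I d f x).
Proof.
  intros hc.
  apply (proj2 (Glb_Rbar_correct _)).
  intros v [t [ht [hxt ->]]].
  now apply hc.
Qed.

Hypothesis hbdd : bounded_below_on I f.

(* Boundedness from below rules out [tail_inf = m_infty], for which [real]
   would return the junk value 0. *)
Lemma ftildeE (x : R) :
  Finite (ftilde I d f x) = Rbar_min (f x) (tail_inf I d f x).
Proof.
  destruct hbdd as [m hm].
  assert (hm_tail : Rbar_le m (tail_inf I d f x)).
  { apply le_tail_inf. intros t ht _. now apply hm. }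
  unfold ftilde.
  apply (Rbar_min_case_strong _ _ (fun r => Finite (real r) = r)); [easy|].
  intros hle.
  destruct (tail_inf I d f x); simpl in *; easy.
Qed.

Lemma ftilde_le_f (x : R) : ftilde I d f x <= f x.
Proof.
  change (Rbar_le (ftilde I d f x) (f x)).
  rewrite ftildeE.
  apply Rbar_min_l.
Qed.

Lemma ftilde_le_tail (x t : R) : I t -> x + d <= t -> ftilde I d f x <= f t.
Proof.
  intros ht hxt.
  change (Rbar_le (ftilde I d f x) (f t)).
  rewrite ftildeE.
  apply Rbar_le_trans with (1 := Rbar_min_r _ _).
  now apply tail_inf_le_f.
Qed.

Lemma le_ftilde (x c : R) :
  c <= f x -> (forall t, I t -> x + d <= t -> c <= f t) -> c <= ftilde I d f x.
Proof.
  intros hcx hct.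
  change (Rbar_le c (ftilde I d f x)).
  rewrite ftildeE.
  apply Rbar_min_case; [exact hcx|].
  now apply le_tail_inf.
Qed.

Lemma ftilde_periodically_increasing :
  0 <= d -> d_periodically_increasing I d (ftilde I d f).
Proof.
  intros hd x y hx hy hxy.
  apply le_ftilde.
  - apply ftilde_le_tail; [exact hy | lra].
  - intros t ht hyt. apply ftilde_le_tail; [exact ht | lra].
Qed.

Lemma periodically_increasing_minorant_le_ftilde (g : R -> R) :
  d_periodically_increasing I d g -> (forall x, I x -> g x <= f x) ->
  forall x, I x -> g x <= ftilde I d f x.
Proof.
  intros hg hgf x hx.
  apply le_ftilde; [now apply hgf|].
  intros t ht hxt.
  apply Rle_trans with (g t); [apply hg; auto; lra | now apply hgf].
Qed.

End TildeMinorant.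

Theorem theorem3p2 (d : R) (I : R -> Prop) (f : R -> R)
  (hd : 0 < d) (hI : is_interval I) (hne : nondegenerate I)
  (hlen : length_ge I d) (hbdd : bounded_below_on I f) :
  (forall x, I x -> ftilde I d f x <= f x) /\
  d_periodically_increasing I d (ftilde I d f) /\
  (forall g : R -> R, d_periodically_increasing I d g ->
     (forall x, I x -> g x <= f x) ->
     forall x, I x -> g x <= ftilde I d f x).
Proof.
  split; [|split].
  - intros x _. now apply ftilde_le_f.
  - apply ftilde_periodically_increasing; [exact hbdd | lra].
  - now apply periodically_increasing_minorant_le_ftilde.
Qed.
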